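(* If an ST graph $G$ with no twins is DI, then its set of thin arcs is a perfect matching of $G$.
   Context: A digraph is a finite vertex set $V$ with arc set $E\subseteq V\times V$. $N^+(v),N^-(v)$ are out-/in-neighborhoods, $N(v)=N^+(v)\cup N^-(v)$, $d(v)=|N(v)|$. Source: $N^-(v)=\emptyset$; sink: $N^+(v)=\emptyset$; ST graph: every vertex is a source or a sink. Two distinct vertices are twins if $N(v)=N(w)$. An arc $v\to w$ is disimplicial if $x\to y$ is an arc for all $x\in N^-(w)$, $y\in N^+(v)$. A diclique is a pair $(V,W)$ of nonempty vertex sets, written $V\to W$, with $v\to w$ an arc for all $v\in V,w\in W$; it contains an arc $v\to w$ if $v\in V,w\in W$; it is maximal if not properly contained componentwise in another diclique; reduced if maximal and containing a disimplicial arc. A digraph is diclique irreducible (DI) if every maximal diclique is reduced. The thin neighbor $\theta(v)$ is the unique $x\in N(v)$ with $d(x)<d(z)$ for all $z\in N(v)\setminus\{x\}$ (undefined if none); an arc $v\to w$ is thin if $\theta(v)=w$ and $\theta(w)=v$. A matching is a set of arcs no two sharing an endpoint; it is perfect if every vertex is an endpoint of one of its arcs. *)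

From mathcomp Require Import all_boot.
Set Implicit Arguments. Unset Strict Implicit. Unset Printing Implicit Defensive.

Section Digraph.
Variables (V : finType) (E : rel V).

Definition outN (v : V) : {set V} := [set w | E v w].
Definition inN (v : V) : {set V} := [set u | E u v].
Definition nbhd (v : V) : {set V} := outN v :|: inN v.
Definition deg (v : V) : nat := #|nbhd v|.

Definition is_source (v : V) : Prop := inN v = set0.
Definition is_sink (v : V) : Prop := outN v = set0.
Definition ST_graph : Prop := forall v, is_source v \/ is_sink v.

Definition twins (v w : V) : Prop := v <> w /\ nbhd v = nbhd w.
Definition no_twins : Prop := forall v w, ~ twins v w.

Definition disimplicial (v w : V) : Prop :=
  E v w /\ forall x y, x \in inN w -> y \in outN v -> E x y.

Definition diclique (A B : {set V}) : Prop :=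
  A != set0 /\ B != set0 /\ forall a b, a \in A -> b \in B -> E a b.

Definition contains_arc (A B : {set V}) (v w : V) : Prop := v \in A /\ w \in B.

Definition maximal_diclique (A B : {set V}) : Prop :=
  diclique A B /\
  forall A' B', diclique A' B' -> A \subset A' -> B \subset B' -> A = A' /\ B = B'.

Definition reduced_diclique (A B : {set V}) : Prop :=
  maximal_diclique A B /\
  exists v w, contains_arc A B v w /\ disimplicial v w.

Definition DI : Prop := forall A B, maximal_diclique A B -> reduced_diclique A B.

Definition thin_nb (v x : V) : Prop :=
  x \in nbhd v /\ forall z, z \in nbhd v -> z != x -> deg x < deg z.

Definition thin_arc (v w : V) : Prop := E v w /\ thin_nb v w /\ thin_nb w v.

Definition matching (M : V * V -> Prop) : Prop :=
  (forall p, M p -> E p.1 p.2) /\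
  (forall p q, M p -> M q -> p <> q ->
     [disjoint [set p.1; p.2] & [set q.1; q.2]]).

Definition perfect_matching (M : V * V -> Prop) : Prop :=
  matching M /\ forall v, exists p, M p /\ (v = p.1 \/ v = p.2).

End Digraph.

From mathcomp Require Import all_boot.
Set Implicit Arguments. Unset Strict Implicit. Unset Printing Implicit Defensive.

(* Every vertex u lies on a disimplicial arc: if u is a source, the diclique
   ({x | N+(u) ⊆ N+(x)}, N+(u)) is maximal, and the tail a of a disimplicial arc
   a -> b in it has N+(a) = N+(u), hence a = u since there are no twins (dually
   for sinks). A disimplicial arc v -> w is thin: every other neighbour z of v
   satisfies N-(w) ⊆ N-(z), and the inclusion is strict for lack of twins, so
   d(w) < d(z); dually at w. Thin neighbours are unique and in an ST graph no
   vertex is both a tail and a head, so distinct thin arcs share no endpoint. *)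

Section ThinArcMatching.
Variables (V : finType) (E : rel V).

Lemma thin_nb_uniq v x y : thin_nb E v x -> thin_nb E v y -> x = y.
Proof.
move=> [xv x_min] [yv y_min]; apply/eqP; apply: contraT => neq_xy.
have neq_yx : y != x by rewrite eq_sym.
by have := ltn_trans (x_min y yv neq_yx) (y_min x xv neq_xy); rewrite ltnn.
Qed.

Lemma outN_maximal_diclique u :
  outN E u != set0 ->
  maximal_diclique E [set x | outN E u \subset outN E x] (outN E u).
Proof.
move=> nz_u; split.
  split; first by apply/set0Pn; exists u; rewrite inE.
  split=> // a b; rewrite inE => /subsetP sub_ua /sub_ua; by rewrite inE.
move=> A B [_ [_ EAB]] sub_A sub_B.
have uA : u \in A by apply: (subsetP sub_A); rewrite inE.
have eq_B : outN E u = B.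
  by apply/eqP; rewrite eqEsubset sub_B; apply/subsetP => b bB; rewrite inE EAB.
split=> //; apply/eqP; rewrite eqEsubset sub_A; apply/subsetP => x xA.
by rewrite inE eq_B; apply/subsetP => y yB; rewrite inE EAB.
Qed.

Lemma inN_maximal_diclique u :
  inN E u != set0 ->
  maximal_diclique E (inN E u) [set y | inN E u \subset inN E y].
Proof.
move=> nz_u; split.
  split=> //; split; first by apply/set0Pn; exists u; rewrite inE.
  move=> a b au; rewrite inE => /subsetP /(_ a au); by rewrite inE.
move=> A B [_ [_ EAB]] sub_A sub_B.
have uB : u \in B by apply: (subsetP sub_B); rewrite inE.
have eq_A : inN E u = A.
  by apply/eqP; rewrite eqEsubset sub_A; apply/subsetP => a aA; rewrite inE EAB.
split=> //; apply/eqP; rewrite eqEsubset sub_B; apply/subsetP => y yB.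
by rewrite inE eq_A; apply/subsetP => x xA; rewrite inE EAB.
Qed.

Hypothesis no_twinsE : no_twins E.

Lemma nbhd_inj : injective (nbhd E).
Proof.
move=> a b eq_ab; apply/eqP; apply: contraT => /eqP neq_ab.
by case: (no_twinsE (conj neq_ab eq_ab)).
Qed.

Lemma deg_lt_nbhd_subset a b :
  a != b -> nbhd E a \subset nbhd E b -> deg E a < deg E b.
Proof.
move=> neq_ab sub_ab; rewrite ltn_neqAle subset_leq_card // andbT.
apply: contra neq_ab => /eqP card_ab; apply/eqP/nbhd_inj/eqP.
by rewrite eqEcard sub_ab -[#|nbhd E b|]card_ab /=.
Qed.

Hypothesis ST : ST_graph E.

Lemma inN_tail v w : E v w -> inN E v = set0.
Proof.
move=> Evw; case: (ST v) => // sink_v.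
by move/setP/(_ w): sink_v; rewrite !inE Evw.
Qed.

Lemma outN_head v w : E v w -> outN E w = set0.
Proof.
move=> Evw; case: (ST w) => // source_w.
by move/setP/(_ v): source_w; rewrite !inE Evw.
Qed.

Lemma nbhd_tail v w : E v w -> nbhd E v = outN E v.
Proof. by move=> Evw; rewrite /nbhd (inN_tail Evw) setU0. Qed.

Lemma nbhd_head v w : E v w -> nbhd E w = inN E w.
Proof. by move=> Evw; rewrite /nbhd (outN_head Evw) set0U. Qed.

Lemma disimplicial_thin_arc v w : disimplicial E v w -> thin_arc E v w.
Proof.
move=> [Evw Dvw]; split=> //; split; split.
- by rewrite (nbhd_tail Evw) inE.
- move=> z; rewrite (nbhd_tail Evw) inE => Evz neq_zw.
  apply: deg_lt_nbhd_subset; first by rewrite eq_sym.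
  rewrite (nbhd_head Evw) (nbhd_head Evz).
  by apply/subsetP => x xw; rewrite inE; apply: Dvw xw _; rewrite inE.
- by rewrite (nbhd_head Evw) inE.
- move=> z; rewrite (nbhd_head Evw) inE => Ezw neq_zv.
  apply: deg_lt_nbhd_subset; first by rewrite eq_sym.
  rewrite (nbhd_tail Evw) (nbhd_tail Ezw).
  by apply/subsetP => y yv; rewrite inE; apply: Dvw _ yv; rewrite inE.
Qed.

Hypothesis DIE : DI E.

Lemma source_disimplicial_tail u :
  is_source E u -> nbhd E u != set0 -> exists w, disimplicial E u w.
Proof.
move=> source_u nz_u.
have Nu : nbhd E u = outN E u by rewrite /nbhd source_u setU0.
rewrite Nu in nz_u.
have [_ [a [b [[aA bu] [Eab Dab]]]]] := DIE (outN_maximal_diclique nz_u).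
suff -> : u = a by exists b.
apply: nbhd_inj; rewrite Nu (nbhd_tail Eab); apply/eqP.
rewrite inE in aA; rewrite eqEsubset aA /=.
by apply/subsetP => y ya; rewrite inE; apply: Dab; rewrite // inE; rewrite inE in bu.
Qed.

Lemma sink_disimplicial_head u :
  is_sink E u -> nbhd E u != set0 -> exists v, disimplicial E v u.
Proof.
move=> sink_u nz_u.
have Nu : nbhd E u = inN E u by rewrite /nbhd sink_u set0U.
rewrite Nu in nz_u.
have [_ [a [b [[au bB] [Eab Dab]]]]] := DIE (inN_maximal_diclique nz_u).
suff -> : u = b by exists a.
apply: nbhd_inj; rewrite Nu (nbhd_head Eab); apply/eqP.
rewrite inE in bB; rewrite eqEsubset bB /=.
by apply/subsetP => x xb; rewrite inE; apply: Dab; rewrite // inE; rewrite inE in au.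
Qed.

Lemma thin_arcs_disjoint a b c d :
  thin_arc E a b -> thin_arc E c d -> (a, b) <> (c, d) ->
  [disjoint [set a; b] & [set c; d]].
Proof.
move=> [Eab [ta tb]] [Ecd [tc td]] neq.
rewrite disjoint_subset; apply/subsetP => x; rewrite !inE.
case/orP=> /eqP ->; apply/negP; case/orP=> /eqP eq_x; subst.
- by case: neq; rewrite (thin_nb_uniq ta tc).
- by move/setP/(_ c): (inN_tail Eab); rewrite !inE Ecd.
- by move/setP/(_ a): (inN_tail Ecd); rewrite !inE Eab.
- by case: neq; rewrite (thin_nb_uniq tb td).
Qed.

Lemma thin_arcs_cover u : nbhd E u != set0 ->
  exists v w, thin_arc E v w /\ (u = v \/ u = w).
Proof.
move=> nz_u; case: (ST u) => [source_u | sink_u].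
- have [w Duw] := source_disimplicial_tail source_u nz_u.
  by exists u, w; split; [exact: disimplicial_thin_arc | left].
- have [v Dvu] := sink_disimplicial_head sink_u nz_u.
  by exists v, u; split; [exact: disimplicial_thin_arc | right].
Qed.

End ThinArcMatching.

Theorem lemma15 (V : finType) (E : rel V) :
  (forall v : V, nbhd E v != set0) ->
  ST_graph E -> no_twins E -> DI E ->
  perfect_matching E (fun p : V * V => thin_arc E p.1 p.2).
Proof.
move=> nz ST NT DIE; split.
  split=> [p [] // | [a b] [c d] /= tab tcd neq].
  exact: thin_arcs_disjoint tab tcd neq.
move=> u; have [v [w [tvw cover]]] := thin_arcs_cover NT ST DIE (nz u).
by exists (v, w).
Qed.
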